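(* For every positive integer $t$, $$B_0(1,2t+1)=p_{de}(2t),\qquad B_0(1,2t)=p_{de}(2t-1)+p_{do}(2t-1),$$ $$B_1(1,2t)=p_{de}(2t-1),\qquad B_1(1,2t+1)=p_{de}(2t)+p_{do}(2t).$$
   Context: For a partition $\pi$, $s(\pi)$ is its smallest part. $\mathrm{Spt}1_{do}(n)$ is the set of partitions $\pi$ of $n$ in which $s(\pi)$ occurs exactly once and the remaining parts are pairwise distinct and each has parity different from that of $s(\pi)$. $B_0(1,n)$ (resp. $B_1(1,n)$) is the number of $\pi\in\mathrm{Spt}1_{do}(n)$ whose number of parts greater than $s(\pi)$ is even (resp. odd). $p_{de}(n)$ (resp. $p_{do}(n)$) is the number of partitions of $n$ into distinct even (resp. distinct odd) parts, with value $1$ at $n=0$. *)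

From mathcomp Require Import all_boot.
Set Implicit Arguments. Unset Strict Implicit. Unset Printing Implicit Defensive.

(* A partition of n is represented by its multiplicity function
   m : {0..n} -> {0..n}, where m i is the number of times the part i occurs.
   (Every part of a partition of n is <= n and occurs at most n times.) *)
Definition ptn (n : nat) := {ffun 'I_n.+1 -> 'I_n.+1}.

Definition is_ptn (n : nat) (m : ptn n) : bool :=
  ((m ord0 : nat) == 0) && (\sum_(i < n.+1) i * m i == n).

Definition is_smallest_part (n : nat) (m : ptn n) (s : 'I_n.+1) : bool :=
  (0 < m s) && [forall i : 'I_n.+1, (i < s) ==> ((m i : nat) == 0)].

Definition nparts_gt (n : nat) (m : ptn n) (s : nat) : nat :=
  \sum_(i < n.+1 | s < i) (m i : nat).

Definition spt1do_at (n : nat) (m : ptn n) (s : 'I_n.+1) : bool :=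
  is_smallest_part m s && ((m s : nat) == 1) &&
  [forall i : 'I_n.+1, (s < i) ==>
      (((m i : nat) <= 1) && ((0 < m i) ==> (odd i != odd s)))].

Definition B (b : bool) (n : nat) : nat :=
  #|[set m : ptn n | is_ptn m &&
      [exists s : 'I_n.+1, is_smallest_part m s && spt1do_at m s &&
                           (odd (nparts_gt m s) == b)]]|.

Definition B0 (n : nat) := B false n.
Definition B1 (n : nat) := B true n.

Definition p_de (n : nat) : nat :=
  #|[set m : ptn n | is_ptn m &&
      [forall i : 'I_n.+1, ((m i : nat) <= 1) && ((0 < m i) ==> ~~ odd i)]]|.

Definition p_do (n : nat) : nat :=
  #|[set m : ptn n | is_ptn m &&
      [forall i : 'I_n.+1, ((m i : nat) <= 1) && ((0 < m i) ==> odd i)]]|.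

From mathcomp Require Import all_boot.
From mathcomp Require Import zify.
From Stdlib Require Import FunctionalExtensionality.
Set Implicit Arguments. Unset Strict Implicit. Unset Printing Implicit Defensive.

(* Lowering the smallest part s of a partition in Spt1_do(n) to s - 1 (deleting it
   when s = 1) leaves a partition of n - 1 into distinct parts all of the parity
   of s - 1; conversely such a partition is restored by raising its smallest part
   by one, or, when its parts are even, alternatively by adding a part 1.
   If s is even, the parts above s are odd, so n and their number k have the same
   parity: lowering is a bijection onto the distinct odd partitions of n - 1 when
   the required parity of k is that of n, and there is nothing otherwise.
   If s is odd, n is odd; raising the smallest part and adding a part 1 give
   values of k of different parity, so exactly one of the two inverses is allowed
   for each required parity of k, and both parities give p_de(n - 1). *)

Lemma card_in_bij (T U : finType) (A : {set T}) (B : {set U}) (f : T -> U) (g : U -> T) :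
  {in A, forall x, f x \in B} -> {in B, forall y, g y \in A} ->
  {in A, cancel f g} -> {in B, cancel g f} -> #|A| = #|B|.
Proof.
move=> fA gB fK gK; rewrite -(card_in_imset (can_in_inj fK)); apply: eq_card => y.
apply/imsetP/idP => [[x xA ->] | yB]; first exact: fA.
by exists (g y); rewrite ?gK ?gB.
Qed.

Lemma sum_upd N (G : nat -> nat -> nat) (f : nat -> nat) a x : a < N ->
  \sum_(i < N) G i ([eta f with a |-> x] i) + G a (f a) = \sum_(i < N) G i (f i) + G a x.
Proof.
move=> aN; rewrite (bigD1 (Ordinal aN)) // [in RHS](bigD1 (Ordinal aN)) //= eqxx.
rewrite (eq_bigr (fun i : 'I_N => G i (f i))) => [|i]; last by rewrite -val_eqE /= => /negbTE ->.
by rewrite addnAC [RHS]addnAC (addnC (G a x)).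
Qed.

Lemma sum_from_least N (F : nat -> nat) s : s < N -> (forall i, i < s -> F i = 0) ->
  \sum_(i < N) F i = F s + \sum_(i < N | s < i) F i.
Proof.
move=> sN Fz; rewrite (bigD1 (Ordinal sN)) //=; congr (_ + _).
rewrite big_mkcond [RHS]big_mkcond; apply: eq_bigr => i _ /=.
by rewrite -val_eqE /=; case: ltngtP => // /Fz.
Qed.

Lemma sum_support N n (F : nat -> nat) : n < N -> (forall i, n < i -> F i = 0) ->
  \sum_(i < N) F i = \sum_(i < n.+1) F i.
Proof.
move=> nN Fz; rewrite (big_ord_widen _ _ nN) [RHS]big_mkcond.
by apply: eq_bigr => i _; case: ltnP => // /Fz.
Qed.

Lemma odd_sum_eq (I : finType) (P : pred I) (F G : I -> nat) :
  (forall i, P i -> odd (F i) = odd (G i)) ->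
  odd (\sum_(i | P i) F i) = odd (\sum_(i | P i) G i).
Proof. by move=> FG; elim/big_ind2: _ => // a b c d; rewrite !oddD => -> ->. Qed.

Lemma weight_support N n (f : nat -> nat) : \sum_(i < N) i * f i = n ->
  (forall i, N <= i -> f i = 0) -> forall i, n < i -> f i = 0.
Proof.
move=> W fz i ni; case: (ltnP i N) => [iN | /fz //].
move: W; rewrite (bigD1 (Ordinal iN)) //=; case: (f i) => // k; rewrite mulnS; lia.
Qed.

Definition mult_ptn n (f : nat -> nat) :=
  [/\ f 0 = 0, forall i, n < i -> f i = 0 & \sum_(i < n.+1) i * f i = n].

Definition least_part (f : nat -> nat) u := 0 < f u /\ forall i, i < u -> f i = 0.

Definition distinct_mult (q : pred nat) (f : nat -> nat) :=
  forall i, f i <= 1 /\ (0 < f i -> q i).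

Definition spt1do_mult (f : nat -> nat) s :=
  [/\ f s = 1, forall i, i < s -> f i = 0 &
      forall i, s < i -> f i <= 1 /\ (0 < f i -> odd i != odd s)].

Lemma mult_ptn_of_weight N n f : n < N -> f 0 = 0 -> (forall i, N <= i -> f i = 0) ->
  \sum_(i < N) i * f i = n -> mult_ptn n f.
Proof.
move=> nN f0 fN W; have fz := weight_support W fN.
by split=> //; rewrite -(sum_support (F := fun i => i * f i) nN) // => i /fz ->; rewrite muln0.
Qed.

Lemma mult_ptn_le n f : mult_ptn n f -> forall i, f i <= n.
Proof.
case=> f0 fz W [|i]; first by rewrite f0.
case: (ltnP n i.+1) => [/fz -> // | iN]; rewrite -W (bigD1 (Ordinal (iN : i.+1 < n.+1))) //=.
exact: leq_trans (leq_pmull _ _) (leq_addr _ _).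
Qed.

Lemma least_part_unique f u v : least_part f u -> least_part f v -> u = v.
Proof.
case=> fu zu [fv zv]; case: (ltngtP u v) => // [/zv | /zu] h; [move: fu | move: fv]; by rewrite h.
Qed.

Lemma exists_least_part n f : 0 < n -> mult_ptn n f -> exists u, least_part f u.
Proof.
move=> n0 [_ _ W].
have [i fi] : exists i, 0 < f i.
  case: (pickP [pred i : 'I_n.+1 | 0 < f i]) => [i fi | none]; first by exists i.
  move: n0; rewrite -W big1 // => i _; move: (none i); rewrite /= lt0n => /negbFE/eqP ->.
  by rewrite muln0.
have [u fu umin] := ex_minnP (ex_intro (fun i => 0 < f i) i fi).
exists u; split=> // j ju; apply/eqP; rewrite -leqn0 leqNgt; apply/negP => /umin.
by rewrite leqNgt ju.
Qed.

Lemma spt1do_least f s : spt1do_mult f s -> least_part f s.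
Proof. by case=> fs zs _; rewrite /least_part fs. Qed.

Lemma least_part_pos f u : f 0 = 0 -> least_part f u -> 0 < u.
Proof. by move=> f0 [fu _]; case: u fu; rewrite ?f0. Qed.

Lemma spt1do_pos n f s : mult_ptn n f -> spt1do_mult f s -> 0 < s.
Proof. by case=> f0 _ _ /spt1do_least; exact: least_part_pos. Qed.

Lemma distinct_mult_sub (q1 q2 : pred nat) f :
  (forall i, q1 i -> q2 i) -> distinct_mult q1 f -> distinct_mult q2 f.
Proof. by move=> q12 df i; have [le1 qi] := df i; split=> // /qi; exact: q12. Qed.

Lemma odd_spt1do n f s : mult_ptn n f -> spt1do_mult f s ->
  odd n = odd s || odd (\sum_(i < n.+1 | s < i) f i).
Proof.
move=> [_ fz W] [fs zs ds].
have sn : s < n.+1 by rewrite ltnS leqNgt; apply/negP => /fz; rewrite fs.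
rewrite -[in LHS]W (sum_from_least (F := fun i => i * f i) sn) => [|i /zs ->]; last by rewrite muln0.
rewrite fs muln1 oddD (odd_sum_eq (G := fun i : 'I_n.+1 => if odd s then 0 else f i)) => [|i si].
  by case: (odd s); rewrite //= big1.
have [le1 par] := ds i si; rewrite oddM.
case: (f i) le1 par => [|[|//]] _ par; first by rewrite andbF; case: ifP.
by move: (par isT); rewrite andbT; case: (odd s); case: (odd i).
Qed.

Lemma odd_distinct_odd n f : mult_ptn n f -> distinct_mult odd f ->
  odd n = odd (\sum_(i < n.+1) f i).
Proof.
move=> [_ _ W] df; rewrite -[X in odd X = _]W; apply: odd_sum_eq => i _.
have [le1 oi] := df i; rewrite oddM.
by case: (f i) le1 oi => [|[|//]] _ /=; [rewrite andbF | move=> /(_ isT) ->].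
Qed.

Lemma odd_distinct_even n f : mult_ptn n f -> distinct_mult (fun i => ~~ odd i) f -> ~~ odd n.
Proof.
move=> [_ _ W] df; rewrite -W (odd_sum_eq (G := fun _ : 'I_n.+1 => 0)) ?big1 // => i _.
rewrite oddM; have [_] := df i.
by case: (posnP (f i)) => [-> | _ /(_ isT) /negbTE ->]; rewrite ?andbF.
Qed.

(* A part 0 stands for no part: [lower f 1] deletes the part 1 and [raise e 0]
   adds one. *)
Definition lower (f : nat -> nat) s : nat -> nat :=
  [eta [eta f with s |-> 0] with s.-1 |-> (1 < s : nat)].

Definition raise (f : nat -> nat) u : nat -> nat :=
  [eta [eta f with u |-> 0] with u.+1 |-> 1].

Section Lower.

Variables (n : nat) (f : nat -> nat) (s : nat).
Hypotheses (f_ptn : mult_ptn n.+1 f) (f_spt : spt1do_mult f s).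

Let s_pos : 0 < s. Proof. exact: spt1do_pos f_ptn f_spt. Qed.

Let s_le : s < n.+2.
Proof. by case: f_ptn f_spt => _ fz _ [fs _ _]; rewrite ltnNge; apply/negP => /fz; rewrite fs. Qed.

Let s_pred_le : s.-1 < n.+2. Proof. exact: leq_ltn_trans (leq_pred s) s_le. Qed.

Let f_pred : f s.-1 = 0. Proof. by case: f_spt => _ zs _; rewrite zs // ltn_predL. Qed.

Let upd_pred : [eta f with s |-> 0] s.-1 = 0.
Proof. by rewrite /= ltn_eqF ?ltn_predL. Qed.

Lemma lower_mult_ptn : mult_ptn n (lower f s).
Proof.
have [f0 fz W] := f_ptn; have [fs zs _] := f_spt.
apply: (mult_ptn_of_weight (N := n.+2)) => //.
- rewrite /lower /= f0 if_same; case: eqP => // e.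
  by rewrite ltnNge -(prednK s_pos) -e.
- move=> i iN; rewrite /lower /= fz //.
  by rewrite (gtn_eqF (leq_trans s_pred_le iN)) (gtn_eqF (leq_trans s_le iN)).
have W_del := sum_upd (fun i x => i * x) f 0 s_le.
have W_add := sum_upd (fun i x => i * x) [eta f with s |-> 0] (1 < s) s_pred_le.
have pred_s : s.-1 * (1 < s) = s.-1 by move: s_pos; case: (s) => [|[|k]] //= _; rewrite muln1.
rewrite upd_pred pred_s in W_add; rewrite fs W in W_del; rewrite /lower; lia.
Qed.

Lemma lower_distinct : distinct_mult (fun i => odd i != odd s) (lower f s).
Proof.
have [_ zs ds] := f_spt; move=> i; rewrite /lower /=.
case: eqP => [-> | _].
  split; first by case: (1 < s).
  by move: s_pos; case: (s) => [|[|k]] //= _ _; case: (odd k).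
case: eqP => [// | /eqP ns]; case: (ltngtP i s) => [/zs -> // | /ds // | /eqP]; by rewrite (negbTE ns).
Qed.

Lemma lower_nparts : \sum_(i < n.+1) lower f s i = \sum_(i < n.+2 | s < i) f i + (1 < s).
Proof.
have [_ lz _] := lower_mult_ptn; have [fs zs _] := f_spt.
rewrite -(sum_support (N := n.+2) (F := lower f s) (ltnW (ltnSn n.+1))) //.
have C_del := sum_upd (fun _ x => x) f 0 s_le.
have C_add := sum_upd (fun _ x => x) [eta f with s |-> 0] (1 < s) s_pred_le.
rewrite upd_pred in C_add; rewrite (sum_from_least s_le zs) fs in C_del; rewrite /lower; lia.
Qed.

Lemma lower_least : 1 < s -> least_part (lower f s) s.-1.
Proof.
move=> s1; have [_ zs _] := f_spt; split; first by rewrite /lower /= eqxx s1.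
move=> i is1; have lt_is : i < s := leq_trans is1 (leq_pred s).
by rewrite /lower /= ltn_eqF // ltn_eqF // zs.
Qed.

Lemma raise_lowerK : raise (lower f s) s.-1 =1 f.
Proof.
have [fs _ _] := f_spt; move=> j; rewrite /raise /lower /= prednK //.
case: (eqVneq j s) => [-> // | /negbTE js].
by case: (eqVneq j s.-1) => [-> | _]; rewrite ?f_pred ?js.
Qed.

End Lower.

(* [e u = (0 < u)]: either u = 0, or u is the (simple) smallest part of e. *)
Definition raisable (e : nat -> nat) u :=
  [/\ distinct_mult (fun i => odd i == odd u) e, forall i, i < u -> e i = 0 & e u = (0 < u)].

Lemma raisable_least e u : e 0 = 0 -> distinct_mult (fun i => odd i == odd u) e ->
  least_part e u -> raisable e u.
Proof.
move=> e0 de [eu ze]; split=> //; have [le1 _] := de u.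
case: (posnP u) => [u0 | _]; first by move: eu; rewrite u0 e0.
by case: (e u) eu le1 => [|[|]].
Qed.

Lemma raisable0 e : e 0 = 0 -> distinct_mult (fun i => ~~ odd i) e -> raisable e 0.
Proof. by move=> e0 de; split=> //; apply: distinct_mult_sub de => i /negbTE ->. Qed.

Section Raise.

Variables (n : nat) (e : nat -> nat) (u : nat).
Hypotheses (e_ptn : mult_ptn n e) (e_raise : raisable e u).

Let e_succ : e u.+1 = 0.
Proof.
case: e_raise => de _ _; have [_] := de u.+1.
by case: (posnP (e u.+1)) => // _ /(_ isT); rewrite oddS; case: odd.
Qed.

Let u_le : u <= n.
Proof.
case: e_ptn e_raise => _ ez _ [_ _ eu]; case: (posnP u) => [-> // | u0].
by rewrite leqNgt; apply/negP => /ez; rewrite eu u0.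
Qed.

Let u_lt : u < n.+2. Proof. by rewrite ltnS leqW. Qed.
Let u_succ_lt : u.+1 < n.+2. Proof. by rewrite ltnS. Qed.

Let upd_succ : [eta e with u |-> 0] u.+1 = 0.
Proof. by rewrite /= gtn_eqF. Qed.

Lemma raise_mult_ptn : mult_ptn n.+1 (raise e u).
Proof.
have [e0 ez W] := e_ptn; have [_ _ eu] := e_raise.
apply: (mult_ptn_of_weight (N := n.+2)) => //.
- by rewrite /raise /= e0 if_same.
- move=> i iN; rewrite /raise /= (gtn_eqF (leq_trans u_succ_lt iN)).
  by rewrite (gtn_eqF (leq_trans u_lt iN)) ez // ltnW.
have W_del := sum_upd (fun i x => i * x) e 0 u_lt.
have W_add := sum_upd (fun i x => i * x) [eta e with u |-> 0] 1 u_succ_lt.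
have uu : u * e u = u by rewrite eu; case: (posnP u) => [-> | _]; rewrite ?muln1.
have Wn2 : \sum_(i < n.+2) i * e i = n.
  by rewrite (sum_support (F := fun i => i * e i) (ltnW (ltnSn n.+1))) // => i /ez ->; rewrite muln0.
rewrite upd_succ in W_add; rewrite uu Wn2 in W_del.
rewrite /raise; lia.
Qed.

Lemma raise_spt1do : spt1do_mult (raise e u) u.+1.
Proof.
have [de ze _] := e_raise; split; first by rewrite /raise /= eqxx.
- move=> i; rewrite ltnS leq_eqVlt => /orP [/eqP -> | iu]; rewrite /raise /=.
    by rewrite ltn_eqF // eqxx.
  by rewrite ltn_eqF ?ltn_eqF ?ze // (ltn_trans iu).
move=> i ui; rewrite /raise /= gtn_eqF // gtn_eqF ?(ltn_trans (ltnSn u) ui) //.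
by have [le1 par] := de i; split=> // /par /eqP ->; case: odd.
Qed.

Lemma raise_nparts : \sum_(i < n.+2 | u.+1 < i) raise e u i + (0 < u) = \sum_(i < n.+1) e i.
Proof.
have [_ ze eu] := e_raise; have [_ ez _] := e_ptn; have [r1 rz _] := raise_spt1do.
have C_del := sum_upd (fun _ x => x) e 0 u_lt.
have C_add := sum_upd (fun _ x => x) [eta e with u |-> 0] 1 u_succ_lt.
rewrite upd_succ (sum_from_least (F := raise e u) u_succ_lt rz) r1 in C_add.
rewrite eu (sum_support (F := e) (ltnW (ltnSn n.+1))) // in C_del.
rewrite /raise in C_add *; lia.
Qed.

Lemma lower_raiseK : lower (raise e u) u.+1 =1 e.
Proof.
have [_ _ eu] := e_raise; move=> j; rewrite /lower /raise /=.
case: (eqVneq j u) => [-> | /negbTE ju]; first by rewrite eu.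
by case: (eqVneq j u.+1) => [-> | _]; rewrite ?e_succ ?ju.
Qed.

End Raise.

Definition mult n (m : ptn n) (i : nat) : nat := if i < n.+1 then m (inord i) : nat else 0.

Definition of_mult n (f : nat -> nat) : ptn n := [ffun i : 'I_n.+1 => inord (f i)].

Lemma multE n (m : ptn n) (i : 'I_n.+1) : mult m i = m i.
Proof. by rewrite /mult ltn_ord inord_val. Qed.

Lemma mult_gt0_lt n (m : ptn n) i : 0 < mult m i -> i < n.+1.
Proof. by rewrite /mult; case: ifP. Qed.

Lemma mult_out n (m : ptn n) i : n < i -> mult m i = 0.
Proof. by move=> ni; rewrite /mult ltnNge ni. Qed.

Lemma multK n : cancel (@mult n) (of_mult n).
Proof. by move=> m; apply/ffunP => i; rewrite ffunE multE inord_val. Qed.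

Lemma eq_of_mult n f g : f =1 g -> of_mult n f = of_mult n g.
Proof. by move=> fg; apply/ffunP => i; rewrite !ffunE fg. Qed.

Lemma mult_of_mult n f : mult_ptn n f -> mult (of_mult n f) = f.
Proof.
move=> fp; have [_ fz _] := fp; apply: functional_extensionality => i; rewrite /mult.
case: ltnP => [iN | ni]; last by rewrite fz.
by rewrite ffunE inordK // inordK // ltnS (mult_ptn_le fp).
Qed.

Lemma is_ptnP n (m : ptn n) : reflect (mult_ptn n (mult m)) (is_ptn m).
Proof.
have W : \sum_(i < n.+1) i * mult m i = \sum_(i < n.+1) i * m i.
  by apply: eq_bigr => i _; rewrite multE.
rewrite /is_ptn -(multE m ord0) -W.
apply: (iffP andP) => [[/eqP m0 /eqP Wn] | [m0 _ Wn]]; last by rewrite m0 Wn.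
by split=> // i; exact: mult_out.
Qed.

Lemma is_smallest_partP n (m : ptn n) (s : 'I_n.+1) :
  reflect (least_part (mult m) s) (is_smallest_part m s).
Proof.
rewrite /is_smallest_part -multE; apply: (iffP andP) => [[ms /forallP zs] | [ms zs]].
  split=> // i lt_is; have iN := ltn_trans lt_is (ltn_ord s).
  by apply/eqP; rewrite (multE m (Ordinal iN)); exact: implyP (zs (Ordinal iN)) lt_is.
by split=> //; apply/forallP => i; apply/implyP => /zs; rewrite multE => ->.
Qed.

Lemma spt1do_atP n (m : ptn n) (s : 'I_n.+1) :
  reflect (spt1do_mult (mult m) s) (spt1do_at m s).
Proof.
rewrite /spt1do_at; apply: (iffP andP) => [[/andP [/is_smallest_partP [_ zs] /eqP ms] /forallP ds] | [ms zs ds]].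
  split=> //; first by rewrite multE.
  move=> i si; case: (ltnP n i) => [/mult_out -> // | iN]; rewrite -ltnS in iN.
  have /implyP/(_ si)/andP [le1 /implyP par] := ds (Ordinal iN).
  by rewrite (multE m (Ordinal iN)).
split; first by rewrite -multE ms eqxx andbT; apply/is_smallest_partP; rewrite /least_part ms.
apply/forallP => i; apply/implyP => si; have [le1 par] := ds i si.
by rewrite -multE le1; apply/implyP.
Qed.

Definition smallest_part n (m : ptn n) : nat :=
  if [pick s | is_smallest_part m s] is Some s then s else 0.

Lemma smallest_partE n (m : ptn n) u : least_part (mult m) u -> smallest_part m = u.
Proof.
move=> lu; rewrite /smallest_part; case: pickP => [s /is_smallest_partP ls | none].
  exact: least_part_unique ls lu.
have uN := mult_gt0_lt lu.1.
by have := none (Ordinal uN); rewrite (introT (is_smallest_partP m (Ordinal uN)) lu).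
Qed.

Definition spt1do_set b n := [set m : ptn n | is_ptn m && [exists s : 'I_n.+1,
  is_smallest_part m s && spt1do_at m s && (odd (nparts_gt m s) == b)]].

Definition distinct_set (q : pred nat) n := [set m : ptn n | is_ptn m &&
  [forall i : 'I_n.+1, ((m i : nat) <= 1) && ((0 < m i) ==> q i)]].

Definition odd_smallest_set n := [set m : ptn n | odd (smallest_part m)].

Lemma spt1do_setP b n (m : ptn n) : m \in spt1do_set b n <->
  mult_ptn n (mult m) /\
  exists2 s, spt1do_mult (mult m) s & odd (\sum_(i < n.+1 | s < i) mult m i) = b.
Proof.
have kE (s : 'I_n.+1) : nparts_gt m s = \sum_(i < n.+1 | s < i) mult m i.
  by apply: eq_bigr => i _; rewrite multE.
rewrite inE; split=> [/andP [/is_ptnP mp /existsP [s /andP [/andP [_ /spt1do_atP ss] /eqP k]]]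
                     | [/is_ptnP mp [s ss k]]].
  by split=> //; exists s; rewrite -?kE.
have [ms _ _] := ss; have sN : s < n.+1 by apply: (@mult_gt0_lt n m); rewrite ms.
have sa : spt1do_at m (Ordinal sN) by apply/spt1do_atP.
rewrite mp; apply/existsP; exists (Ordinal sN); rewrite sa kE k eqxx !andbT.
by case/andP: sa => /andP [].
Qed.

Lemma distinct_setP q n (m : ptn n) :
  m \in distinct_set q n <-> mult_ptn n (mult m) /\ distinct_mult q (mult m).
Proof.
rewrite inE; split=> [/andP [/is_ptnP mp /forallP dm] | [/is_ptnP mp dm]].
  split=> // i; case: (ltnP n i) => [/mult_out -> // | iN]; rewrite -ltnS in iN.
  by rewrite (multE m (Ordinal iN)); have /andP [-> /implyP] := dm (Ordinal iN).
rewrite mp; apply/forallP => i; rewrite -multE; have [-> qi] := dm i; exact/implyP.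
Qed.

Lemma in_odd_smallest_set n (m : ptn n) : (m \in odd_smallest_set n) = odd (smallest_part m).
Proof. by rewrite inE. Qed.

Definition lower_ptn n (m : ptn n.+1) : ptn n := of_mult n (lower (mult m) (smallest_part m)).

Definition raise_ptn n (m : ptn n) u : ptn n.+1 := of_mult n.+1 (raise (mult m) u).

Section LowerPtn.

Variables (n : nat) (m : ptn n.+1) (s : nat).
Hypotheses (m_ptn : mult_ptn n.+1 (mult m)) (m_spt : spt1do_mult (mult m) s).

Lemma mult_lower_ptn : mult (lower_ptn m) = lower (mult m) s.
Proof.
rewrite /lower_ptn (smallest_partE (spt1do_least m_spt)) mult_of_mult //.
exact: lower_mult_ptn.
Qed.

Lemma lower_ptn_distinct (q : pred nat) :
  (forall i, odd i != odd s -> q i) -> lower_ptn m \in distinct_set q n.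
Proof.
move=> sq; apply/distinct_setP; rewrite mult_lower_ptn; split; first exact: lower_mult_ptn.
exact: distinct_mult_sub sq (lower_distinct m_ptn m_spt).
Qed.

Lemma smallest_part_lower_ptn : 1 < s -> smallest_part (lower_ptn m) = s.-1.
Proof. by move=> s1; apply: smallest_partE; rewrite mult_lower_ptn; exact: lower_least. Qed.

Lemma raise_lower_ptnK : raise_ptn (lower_ptn m) s.-1 = m.
Proof. by rewrite /raise_ptn mult_lower_ptn (eq_of_mult _ (raise_lowerK m_ptn m_spt)) multK. Qed.

End LowerPtn.

Section RaisePtn.

Variables (n : nat) (e : ptn n) (u : nat).
Hypotheses (e_ptn : mult_ptn n (mult e)) (e_raise : raisable (mult e) u).

Lemma mult_raise_ptn : mult (raise_ptn e u) = raise (mult e) u.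
Proof. by rewrite mult_of_mult //; exact: raise_mult_ptn. Qed.

Lemma smallest_part_raise_ptn : smallest_part (raise_ptn e u) = u.+1.
Proof. by apply: smallest_partE; rewrite mult_raise_ptn; apply: spt1do_least; exact: raise_spt1do. Qed.

Lemma raise_ptn_spt1do_set b :
  odd (\sum_(i < n.+1) mult e i) (+) (0 < u) = b -> raise_ptn e u \in spt1do_set b n.+1.
Proof.
move=> eb; apply/spt1do_setP; rewrite mult_raise_ptn; split; first exact: raise_mult_ptn.
exists u.+1; first exact: raise_spt1do.
by rewrite -eb -(raise_nparts e_ptn e_raise) oddD oddb addbK.
Qed.

Lemma lower_raise_ptnK : lower_ptn (raise_ptn e u) = e.
Proof.
rewrite /lower_ptn smallest_part_raise_ptn mult_raise_ptn.
by rewrite (eq_of_mult _ (lower_raiseK e_raise)) multK.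
Qed.

End RaisePtn.

Lemma card_spt1do_even b n : 0 < n -> odd n.+1 = b ->
  #|spt1do_set b n.+1 :\: odd_smallest_set n.+1| = p_do n.
Proof.
move=> n0 nb; change (p_do n) with #|distinct_set odd n|.
have least_odd e : e \in distinct_set odd n ->
    [/\ mult_ptn n (mult e), distinct_mult odd (mult e), raisable (mult e) (smallest_part e)
      & odd (smallest_part e)].
  move=> /distinct_setP [ep ed]; have [e0 _ _] := ep; have [u lu] := exists_least_part n0 ep.
  have ou : odd u by have [_ /(_ lu.1)] := ed u.
  rewrite (smallest_partE lu); split=> //.
  by apply: raisable_least e0 _ lu; apply: distinct_mult_sub ed => i ->; rewrite ou.
apply: (card_in_bij (f := @lower_ptn n) (g := fun e => raise_ptn e (smallest_part e))).
- move=> m; rewrite in_setD in_odd_smallest_set => /andP [sodd /spt1do_setP [mp [s ss _]]].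
  rewrite (smallest_partE (spt1do_least ss)) in sodd.
  by apply: (lower_ptn_distinct mp ss) => i; rewrite (negbTE sodd); case: odd.
- move=> e /least_odd [ep ed er ou].
  rewrite in_setD in_odd_smallest_set smallest_part_raise_ptn //= ou /=.
  apply: raise_ptn_spt1do_set => //.
  have -> : 0 < smallest_part e by case: (smallest_part e) ou.
  by rewrite -nb -(odd_distinct_odd ep ed) addbT.
- move=> m; rewrite in_setD in_odd_smallest_set => /andP [sodd /spt1do_setP [mp [s ss _]]].
  rewrite (smallest_partE (spt1do_least ss)) in sodd.
  have s1 : 1 < s by move: (spt1do_pos mp ss) sodd; case: (s) => [|[|]].
  by rewrite (smallest_part_lower_ptn mp ss s1) raise_lower_ptnK.
- by move=> e /least_odd [ep _ er _]; exact: lower_raise_ptnK.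
Qed.

Lemma card_spt1do_odd b n : 0 < n ->
  #|spt1do_set b n.+1 :&: odd_smallest_set n.+1| = p_de n.
Proof.
move=> n0; change (p_de n) with #|distinct_set (fun i => ~~ odd i) n|.
(* Adding a part 1 keeps the number of parts above the new smallest part, raising
   the smallest part decreases it by one. *)
pose u (e : ptn n) := if odd (\sum_(i < n.+1) mult e i) == b then 0 else smallest_part e.
have ue e : e \in distinct_set (fun i => ~~ odd i) n ->
    [/\ mult_ptn n (mult e), raisable (mult e) (u e), ~~ odd (u e)
      & odd (\sum_(i < n.+1) mult e i) (+) (0 < u e) = b].
  move=> /distinct_setP [ep ed]; have [e0 _ _] := ep; rewrite /u.
  case: eqP => [-> | /eqP nb]; first by split=> //; [exact: raisable0 | rewrite addbF].
  have [v lv] := exists_least_part n0 ep; have ov : ~~ odd v by have [_ /(_ lv.1)] := ed v.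
  rewrite (smallest_partE lv) (least_part_pos e0 lv) addbT; split=> //.
    by apply: raisable_least e0 _ lv; apply: distinct_mult_sub ed => i /negbTE ->; rewrite (negbTE ov).
  by move: nb; case: (b); case: odd.
apply: (card_in_bij (f := @lower_ptn n) (g := fun e => raise_ptn e (u e))).
- move=> m; rewrite in_setI in_odd_smallest_set => /andP [/spt1do_setP [mp [s ss _]] sodd].
  rewrite (smallest_partE (spt1do_least ss)) in sodd.
  by apply: (lower_ptn_distinct mp ss) => i; rewrite sodd; case: odd.
- move=> e /ue [ep er ue_even eb].
  rewrite in_setI in_odd_smallest_set smallest_part_raise_ptn //= ue_even andbT.
  exact: raise_ptn_spt1do_set.
- move=> m; rewrite in_setI => /andP [/spt1do_setP [mp [s ss k]] _].
  suff -> : u (lower_ptn m) = s.-1 by exact: raise_lower_ptnK.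
  rewrite /u (mult_lower_ptn mp ss) lower_nparts // oddD oddb k.
  case: (ltngtP 1 s) => [s1 | | <-]; last by rewrite addbF eqxx.
    by rewrite addbT (_ : (~~ b == b) = false) ?(smallest_part_lower_ptn mp ss s1) //; case: (b).
  by rewrite ltnNge (spt1do_pos mp ss).
- by move=> e /ue [ep er _ _]; exact: lower_raise_ptnK.
Qed.

Lemma card_spt1do_even0 b n : odd n != b ->
  #|spt1do_set b n :\: odd_smallest_set n| = 0.
Proof.
move=> nb; apply: eq_card0 => m; rewrite in_setD in_odd_smallest_set.
apply/negP => /andP [sodd /spt1do_setP [mp [s ss k]]].
rewrite (smallest_partE (spt1do_least ss)) in sodd.
by move: nb; rewrite (odd_spt1do mp ss) (negbTE sodd) k eqxx.
Qed.

Lemma card_spt1do_odd0 b n : ~~ odd n -> #|spt1do_set b n :&: odd_smallest_set n| = 0.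
Proof.
move=> nev; apply: eq_card0 => m; rewrite in_setI in_odd_smallest_set.
apply/negP => /andP [/spt1do_setP [mp [s ss _]] sodd].
rewrite (smallest_partE (spt1do_least ss)) in sodd.
by move: nev; rewrite (odd_spt1do mp ss) sodd.
Qed.

Lemma p_de_odd n : odd n -> p_de n = 0.
Proof.
move=> nodd; apply: eq_card0 => m; apply/negP => /(distinct_setP (fun i => ~~ odd i)) [mp md].
by move: nodd; rewrite (negbTE (odd_distinct_even mp md)).
Qed.

Theorem lemma5 (t : nat) (ht : 0 < t) :
  [/\ B0 (2 * t).+1 = p_de (2 * t),
      B0 (2 * t) = p_de (2 * t).-1 + p_do (2 * t).-1,
      B1 (2 * t) = p_de (2 * t).-1
    & B1 (2 * t).+1 = p_de (2 * t) + p_do (2 * t)].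
Proof.
have B_split b n : B b n = #|spt1do_set b n :&: odd_smallest_set n| +
                           #|spt1do_set b n :\: odd_smallest_set n| by rewrite cardsID.
have pos_2t : 0 < 2 * t by rewrite muln_gt0.
have even_2t : odd (2 * t) = false by rewrite oddM.
have k0 : 0 < (2 * t).-1 by case: t ht {pos_2t even_2t} => [|[|]].
set k := (2 * t).-1; have k_succ : 2 * t = k.+1 by rewrite prednK.
have kodd : odd k by move: even_2t; rewrite k_succ /=; case: odd.
rewrite /B0 /B1 !B_split (p_de_odd kodd) !add0n.
split.
- by rewrite card_spt1do_odd ?card_spt1do_even0 ?addn0 //= even_2t.
- by rewrite k_succ card_spt1do_odd0 ?card_spt1do_even //= kodd.
- by rewrite k_succ card_spt1do_odd0 ?card_spt1do_even0 //= kodd.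
- by rewrite card_spt1do_odd ?card_spt1do_even //= even_2t.
Qed.
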